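(* Let $\alpha,\beta\in\mathbb{Z}[\rho]$ be nonzero with $N(\alpha)\ge 7$. Then $EJ_{\alpha\beta}$ is an $N(\beta)$-fold cover of $EJ_\alpha$.
   Context: $\rho=(1+\sqrt{-3})/2$, $\mathbb{Z}[\rho]=\{x+y\rho: x,y\in\mathbb{Z}\}$ with norm $N(x+y\rho)=x^2+xy+y^2$ (multiplicative). For $N(\gamma)\ge 7$, $EJ_\gamma$ is the Cayley graph on the additive group of $\mathbb{Z}[\rho]/(\gamma)$ with connection set $\{\pm[1]_\gamma,\pm[\rho]_\gamma,\pm[\rho^2]_\gamma\}$, where $[\xi]_\gamma$ is the residue class modulo $(\gamma)$. A graph $\Gamma_1$ is a cover of $\Gamma_2$ if there is a surjection $\phi:V(\Gamma_1)\to V(\Gamma_2)$ whose restriction to the neighbourhood of each $u\in V(\Gamma_1)$ is a bijection onto the neighbourhood of $\phi(u)$; it is a $k$-fold cover if moreover $|\phi^{-1}(v)|=k$ for all $v$. *)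

(* Eisenstein integers Z[rho], rho = (1 + sqrt(-3))/2, rho^2 = rho - 1. *)
From Stdlib Require Import ZArith List.
Open Scope Z_scope.

(* x + y*rho *)
Record EI := mkEI { re : Z; im : Z }.

Definition ei_zero : EI := mkEI 0 0.
Definition ei_one : EI := mkEI 1 0.
Definition ei_rho : EI := mkEI 0 1.
Definition ei_add (a b : EI) : EI := mkEI (re a + re b) (im a + im b).
Definition ei_opp (a : EI) : EI := mkEI (- re a) (- im a).
Definition ei_sub (a b : EI) : EI := ei_add a (ei_opp b).
(* (a + b rho)(c + d rho) = (ac - bd) + (ad + bc + bd) rho, using rho^2 = rho - 1 *)
Definition ei_mul (a b : EI) : EI :=
  mkEI (re a * re b - im a * im b)
       (re a * im b + im a * re b + im a * im b).
Definition ei_norm (a : EI) : Z := re a * re a + re a * im a + im a * im a.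
Definition ei_rho2 : EI := ei_mul ei_rho ei_rho.

Definition ei_cong (g x y : EI) : Prop := exists d, ei_sub x y = ei_mul g d.

(* residue classes modulo (g): the vertex set Z[rho]/(g) *)
Record EJV (g : EI) := mkEJV {
  cls : EI -> Prop;
  cls_ok : exists x, forall y, cls y <-> ei_cong g y x }.
Arguments cls {g} _ _.

Definition ei_conn (c : EI) : Prop :=
  c = ei_one \/ c = ei_opp ei_one \/ c = ei_rho \/ c = ei_opp ei_rho
  \/ c = ei_rho2 \/ c = ei_opp ei_rho2.

Definition EJ_adj (g : EI) (u v : EJV g) : Prop :=
  exists x y c, cls u x /\ cls v y /\ ei_conn c /\ ei_cong g (ei_sub y x) c.

Definition is_cover {V1 V2 : Type} (adj1 : V1 -> V1 -> Prop) (adj2 : V2 -> V2 -> Prop)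
  (phi : V1 -> V2) : Prop :=
  (forall v, exists u, phi u = v) /\
  (forall u,
     (forall w, adj1 u w -> adj2 (phi u) (phi w)) /\
     (forall v, adj2 (phi u) v -> exists! w, adj1 u w /\ phi w = v)).

Definition is_kfold_cover {V1 V2 : Type} (adj1 : V1 -> V1 -> Prop) (adj2 : V2 -> V2 -> Prop)
  (phi : V1 -> V2) (k : nat) : Prop :=
  is_cover adj1 adj2 phi /\
  (forall v, exists l : list V1,
     NoDup l /\ length l = k /\ (forall u, In u l <-> phi u = v)).

(* [x] |-> [x] mod alpha is well defined on Z[rho]/(alpha beta), and it is a local
   bijection because the six elements of the connection set stay pairwise
   incongruent modulo alpha: their differences have norm at most 4 < 7 <= N(alpha).
   The fibre over [z] is { [z + alpha t] : t in R } for any complete system R of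
   residues modulo beta, and multiplication by alpha is injective on residues, so
   each fibre has |Z[rho]/(beta)| = N(beta) elements.  Such an R is the box
   [0, N(beta)/g) x [0, g) in the coordinates x + y rho, g = gcd of the coordinates
   of beta: the ideal (beta) contains N(beta)/g and an element with rho-coordinate
   g, all rho-coordinates in (beta) are multiples of g, and its rational integers
   are multiples of N(beta)/g. *)
From Stdlib Require Import ZArith List Lia Znumtheory FinFun.
From Stdlib Require Import FunctionalExtensionality PropExtensionality ProofIrrelevance.
Open Scope Z_scope.

Ltac ei_unfold :=
  unfold ei_sub, ei_add, ei_opp, ei_mul, ei_norm, ei_zero, ei_one, ei_rho, ei_rho2 in *;
  cbn [re im] in *.
Ltac ei_ring := repeat match goal with e : EI |- _ => destruct e end; ei_unfold; f_equal; ring.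

Lemma ei_eq_dec (a b : EI) : {a = b} + {a <> b}.
Proof. decide equality; apply Z.eq_dec. Qed.

Lemma ei_mulA a b c : ei_mul (ei_mul a b) c = ei_mul a (ei_mul b c).
Proof. ei_ring. Qed.

Lemma ei_norm_mul a b : ei_norm (ei_mul a b) = ei_norm a * ei_norm b.
Proof. destruct a, b; ei_unfold; ring. Qed.

Lemma ei_norm_ge0 a : 0 <= ei_norm a.
Proof. destruct a as [x y]; ei_unfold; nia. Qed.

Lemma ei_norm_eq0 a : ei_norm a = 0 -> a = ei_zero.
Proof. destruct a as [x y]; ei_unfold; intros; f_equal; nia. Qed.

Lemma ei_norm_gt0 a : a <> ei_zero -> 0 < ei_norm a.
Proof.
  intros Ha; pose proof (ei_norm_ge0 a).
  destruct (Z.eq_dec (ei_norm a) 0) as [E|E]; [now apply ei_norm_eq0 in E | lia].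
Qed.

Lemma ei_mul_eq0 a b : a <> ei_zero -> ei_mul a b = ei_zero -> b = ei_zero.
Proof.
  intros Ha Hab; apply ei_norm_eq0.
  apply (f_equal ei_norm) in Hab; rewrite ei_norm_mul in Hab.
  pose proof (ei_norm_gt0 a Ha); pose proof (ei_norm_ge0 b).
  change (ei_norm ei_zero) with 0 in Hab; nia.
Qed.

Definition ei_dvd (g x : EI) : Prop := exists d, x = ei_mul g d.

Lemma ei_congE g x y : ei_cong g x y <-> ei_dvd g (ei_sub x y).
Proof. reflexivity. Qed.

Lemma ei_dvd_add g x y : ei_dvd g x -> ei_dvd g y -> ei_dvd g (ei_add x y).
Proof. intros [d ->] [e ->]; exists (ei_add d e); ei_ring. Qed.

Lemma ei_dvd_mull g c x : ei_dvd g x -> ei_dvd g (ei_mul c x).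
Proof. intros [d ->]; exists (ei_mul c d); ei_ring. Qed.

Lemma ei_cong_refl g x : ei_cong g x x.
Proof. exists ei_zero; ei_ring. Qed.

Lemma ei_cong_sym g x y : ei_cong g x y -> ei_cong g y x.
Proof.
  rewrite !ei_congE; intros H.
  replace (ei_sub y x) with (ei_mul (ei_opp ei_one) (ei_sub x y)) by ei_ring.
  now apply ei_dvd_mull.
Qed.

Lemma ei_cong_trans g x y z : ei_cong g x y -> ei_cong g y z -> ei_cong g x z.
Proof.
  rewrite !ei_congE; intros Hxy Hyz.
  replace (ei_sub x z) with (ei_add (ei_sub x y) (ei_sub y z)) by ei_ring.
  now apply ei_dvd_add.
Qed.

Lemma ei_cong_sub_eq g x y x' y' :
  ei_sub x y = ei_sub x' y' -> ei_cong g x y <-> ei_cong g x' y'.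
Proof. intros E; rewrite !ei_congE, E; reflexivity. Qed.

Lemma ei_cong_add2l g z x y : ei_cong g (ei_add z x) (ei_add z y) <-> ei_cong g x y.
Proof. apply ei_cong_sub_eq; ei_ring. Qed.

Lemma ei_cong_add2r g z x y : ei_cong g (ei_add x z) (ei_add y z) <-> ei_cong g x y.
Proof. apply ei_cong_sub_eq; ei_ring. Qed.

Lemma ei_cong_subl g x y c : ei_cong g (ei_sub y x) c <-> ei_cong g y (ei_add x c).
Proof. apply ei_cong_sub_eq; ei_ring. Qed.

Lemma ei_cong_mulr g h x y : ei_cong (ei_mul g h) x y -> ei_cong g x y.
Proof. intros [d E]; exists (ei_mul h d); now rewrite E, ei_mulA. Qed.

Lemma ei_cong_add_mul g x s : ei_cong g (ei_add x (ei_mul g s)) x.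
Proof. exists s; ei_ring. Qed.

Lemma ei_cong_add_mul_inv g x y : ei_cong g y x -> exists s, y = ei_add x (ei_mul g s).
Proof. intros [s E]; exists s; rewrite <- E; ei_ring. Qed.

Lemma ei_cong_mul2l a b s t :
  a <> ei_zero -> ei_cong (ei_mul a b) (ei_mul a s) (ei_mul a t) <-> ei_cong b s t.
Proof.
  intros Ha; split; intros [d E]; exists d.
  - assert (Z0 : ei_mul a (ei_sub (ei_sub s t) (ei_mul b d)) = ei_zero).
    { replace (ei_mul a (ei_sub (ei_sub s t) (ei_mul b d)))
        with (ei_sub (ei_sub (ei_mul a s) (ei_mul a t)) (ei_mul (ei_mul a b) d)) by ei_ring.
      rewrite E; ei_ring. }
    apply ei_mul_eq0 in Z0; [|exact Ha].
    replace (ei_sub s t) with (ei_add (ei_sub (ei_sub s t) (ei_mul b d)) (ei_mul b d)) by ei_ring.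
    rewrite Z0; ei_ring.
  - replace (ei_sub (ei_mul a s) (ei_mul a t)) with (ei_mul a (ei_sub s t)) by ei_ring.
    rewrite E; ei_ring.
Qed.

Lemma ei_conn_sub_norm c c' :
  ei_conn c -> ei_conn c' -> c <> c' -> 1 <= ei_norm (ei_sub c c') <= 4.
Proof.
  unfold ei_conn; intros Hc Hc' Hne;
    repeat match goal with h : _ \/ _ |- _ => destruct h end; subst;
    solve [ now contradiction Hne | vm_compute; split; discriminate ].
Qed.

Lemma ei_conn_cong_eq g c c' :
  7 <= ei_norm g -> ei_conn c -> ei_conn c' -> ei_cong g c c' -> c = c'.
Proof.
  intros Hg Hc Hc' [d E].
  destruct (ei_eq_dec c c') as [|Hne]; [assumption|].
  pose proof (ei_conn_sub_norm c c' Hc Hc' Hne) as Hn.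
  rewrite E, ei_norm_mul in Hn; pose proof (ei_norm_ge0 d).
  destruct (Z.eq_dec (ei_norm d) 0); nia.
Qed.

Definition Zrange (n : Z) : list Z := map Z.of_nat (seq 0 (Z.to_nat n)).

Lemma in_Zrange n k : In k (Zrange n) <-> 0 <= k < n.
Proof.
  unfold Zrange; rewrite in_map_iff; split.
  - intros [m [<- Hm]]; apply in_seq in Hm; lia.
  - intros Hk; exists (Z.to_nat k); rewrite in_seq; split; lia.
Qed.

Lemma Zrange_NoDup n : NoDup (Zrange n).
Proof. apply Injective_map_NoDup; [intros x y; lia | apply seq_NoDup]. Qed.

Definition ei_box (n g : Z) : list EI :=
  map (fun k => mkEI (k mod n) (k / n)) (Zrange (n * g)).

Lemma in_ei_box n g t : 0 < n -> In t (ei_box n g) <-> 0 <= re t < n /\ 0 <= im t < g.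
Proof.
  intros Hn; unfold ei_box; rewrite in_map_iff; split.
  - intros [k [<- Hk]]; apply in_Zrange in Hk; cbn [re im].
    split; [apply Z.mod_pos_bound; lia|].
    split; [apply Z.div_pos | apply Z.div_lt_upper_bound]; lia.
  - destruct t as [i j]; cbn [re im]; intros [Hi Hj].
    exists (i + n * j); rewrite in_Zrange; split; [|nia].
    f_equal; [symmetry; apply (Z.mod_unique _ _ j) | symmetry; apply (Z.div_unique _ _ _ i)]; lia.
Qed.

Lemma ei_box_NoDup n g : 0 < n -> NoDup (ei_box n g).
Proof.
  intros Hn; apply Injective_map_NoDup; [|apply Zrange_NoDup].
  intros k k' E; injection E as Emod Ediv.
  rewrite (Z.div_mod k n), (Z.div_mod k' n) by lia; congruence.
Qed.

Lemma length_ei_box n g : length (ei_box n g) = Z.to_nat (n * g).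
Proof. unfold ei_box, Zrange; now rewrite length_map, length_map, length_seq. Qed.

Lemma Z_divide_small m x : (m | x) -> Z.abs x < Z.abs m -> x = 0.
Proof.
  intros Hdvd Hx; destruct (Z.eq_dec x 0) as [|Hx0]; [assumption|].
  pose proof (Zdivide_bounds m x Hdvd Hx0); lia.
Qed.

(* The box is a transversal of (beta) as soon as (beta), viewed as a lattice in Z^2, has
   the Hermite basis (n, 0), (e, g). *)
Section Transversal.
Variables (beta : EI) (n g e : Z).
Hypothesis n_gt0 : 0 < n.
Hypothesis g_gt0 : 0 < g.
Hypothesis dvd_n : ei_dvd beta (mkEI n 0).
Hypothesis dvd_eg : ei_dvd beta (mkEI e g).
Hypothesis dvd_im : forall x, ei_dvd beta x -> (g | im x).
Hypothesis dvd_re : forall X, ei_dvd beta (mkEI X 0) -> (n | X).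

Lemma ei_box_complete s : exists t, In t (ei_box n g) /\ ei_cong beta s t.
Proof.
  destruct s as [x y].
  set (q := y / g); set (j := y mod g).
  set (p := (x - q * e) / n); set (i := (x - q * e) mod n).
  exists (mkEI i j); split.
  - apply in_ei_box; cbn [re im]; [lia|]; split; apply Z.mod_pos_bound; lia.
  - assert (Ey : y = g * q + j) by (apply Z.div_mod; lia).
    assert (Ex : x - q * e = n * p + i) by (apply Z.div_mod; lia).
    apply ei_congE.
    replace (ei_sub (mkEI x y) (mkEI i j))
      with (ei_add (ei_mul (mkEI q 0) (mkEI e g)) (ei_mul (mkEI p 0) (mkEI n 0))).
    + apply ei_dvd_add; now apply ei_dvd_mull.
    + ei_unfold; f_equal; lia.
Qed.

Lemma ei_box_distinct t t' :
  In t (ei_box n g) -> In t' (ei_box n g) -> ei_cong beta t t' -> t = t'.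
Proof.
  rewrite !in_ei_box by lia; destruct t as [i j], t' as [i' j']; cbn [re im].
  intros [Hi Hj] [Hi' Hj'] Hcong; apply ei_congE in Hcong.
  assert (Ej : j - j' = 0).
  { apply (Z_divide_small g); [apply (dvd_im _ Hcong) | lia]. }
  assert (Hre : ei_dvd beta (mkEI (i - i') 0)).
  { replace (mkEI (i - i') 0) with (ei_sub (mkEI i j) (mkEI i' j')) by (ei_unfold; f_equal; lia).
    exact Hcong. }
  assert (Ei : i - i' = 0) by (apply (Z_divide_small n); [apply dvd_re, Hre | lia]).
  f_equal; lia.
Qed.

End Transversal.

Definition ei_gcd (a : EI) : Z := Z.gcd (re a) (im a).

(* The least positive rational integer in the ideal (a). *)
Definition ei_least_int (a : EI) : Z := ei_norm a / ei_gcd a.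

Section HermiteBasis.
Variable beta : EI.
Hypothesis beta_neq0 : beta <> ei_zero.

Lemma ei_gcd_gt0 : 0 < ei_gcd beta.
Proof.
  unfold ei_gcd; pose proof (Z.gcd_nonneg (re beta) (im beta)).
  destruct (Z.eq_dec (Z.gcd (re beta) (im beta)) 0) as [E|E]; [|lia].
  apply Z.gcd_eq_0 in E; destruct beta as [x y]; cbn [re im] in E.
  destruct E; subst; contradiction.
Qed.

Lemma ei_gcd_dvd_im x : ei_dvd beta x -> (ei_gcd beta | im x).
Proof.
  intros [d ->]; unfold ei_gcd.
  pose proof (Z.gcd_divide_l (re beta) (im beta)); pose proof (Z.gcd_divide_r (re beta) (im beta)).
  ei_unfold; repeat apply Z.divide_add_r; now apply Z.divide_mul_l.
Qed.

Lemma ei_dvd_gcd_im : exists e, ei_dvd beta (mkEI e (ei_gcd beta)).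
Proof.
  destruct (Z.gcd_bezout (re beta) (im beta) _ eq_refl) as (u & v & Huv).
  exists (re (ei_mul beta (mkEI (v - u) u))), (mkEI (v - u) u).
  unfold ei_gcd; rewrite <- Huv; ei_unfold; f_equal; ring.
Qed.

Lemma ei_norm_gcd_factor :
  exists a' b', re beta = ei_gcd beta * a' /\ im beta = ei_gcd beta * b' /\
                ei_least_int beta = ei_gcd beta * (a' * a' + a' * b' + b' * b').
Proof.
  pose proof ei_gcd_gt0 as Hg.
  destruct (Z.gcd_divide_l (re beta) (im beta)) as [a' Ha].
  destruct (Z.gcd_divide_r (re beta) (im beta)) as [b' Hb].
  unfold ei_least_int, ei_norm; fold (ei_gcd beta) in *.
  set (g := ei_gcd beta) in *; clearbody g.
  exists a', b'; rewrite Ha, Hb; split; [ring | split; [ring|]].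
  replace (a' * g * (a' * g) + a' * g * (b' * g) + b' * g * (b' * g))
    with (g * (a' * a' + a' * b' + b' * b') * g) by ring.
  now rewrite Z.div_mul by lia.
Qed.

Lemma ei_norm_least_int : ei_norm beta = ei_least_int beta * ei_gcd beta.
Proof.
  destruct ei_norm_gcd_factor as (a' & b' & Ha & Hb & Hn).
  rewrite Hn; unfold ei_norm; rewrite Ha, Hb; ring.
Qed.

Lemma ei_least_int_gt0 : 0 < ei_least_int beta.
Proof.
  pose proof (ei_norm_gt0 _ beta_neq0); pose proof ei_gcd_gt0.
  rewrite ei_norm_least_int in *; nia.
Qed.

(* The witness is conj(beta) / gcd. *)
Lemma ei_dvd_least_int : ei_dvd beta (mkEI (ei_least_int beta) 0).
Proof.
  destruct ei_norm_gcd_factor as (a' & b' & Ha & Hb & Hn).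
  set (g := ei_gcd beta) in *; clearbody g.
  exists (mkEI (a' + b') (- b')); rewrite Hn; ei_unfold; rewrite Ha, Hb; f_equal; ring.
Qed.

Lemma ei_least_int_dvd X : ei_dvd beta (mkEI X 0) -> (ei_least_int beta | X).
Proof.
  (* Multiplying beta d = X by conj(beta) gives N(beta) | X a and N(beta) | X b,
     hence N(beta) | gcd(X a, X b) = |X| gcd(a, b). *)
  intros [d E]; pose proof ei_gcd_gt0.
  assert (Hxa : (ei_norm beta | X * re beta)).
  { exists (re d + im d).
    destruct beta as [x y], d as [d1 d2]; ei_unfold; injection E as -> E2.
    apply Z.sub_move_0_r; transitivity (- (x + y) * (x * d2 + y * d1 + y * d2)); [ring|].
    rewrite <- E2; ring. }
  assert (Hxb : (ei_norm beta | X * im beta)).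
  { exists (- im d).
    destruct beta as [x y], d as [d1 d2]; ei_unfold; injection E as -> E2.
    apply Z.sub_move_0_r; transitivity (x * (x * d2 + y * d1 + y * d2)); [ring|].
    rewrite <- E2; ring. }
  pose proof (Z.gcd_greatest _ _ _ Hxa Hxb) as Hg.
  rewrite Z.gcd_mul_mono_l, ei_norm_least_int in Hg; fold (ei_gcd beta) in Hg.
  apply Z.divide_abs_r, (Z.mul_divide_cancel_r _ _ (ei_gcd beta)); [lia|].
  exact Hg.
Qed.

End HermiteBasis.

Lemma ei_residue_system beta :
  beta <> ei_zero ->
  exists R : list EI,
    NoDup R /\ length R = Z.to_nat (ei_norm beta) /\
    (forall s, exists t, In t R /\ ei_cong beta s t) /\
    (forall t t', In t R -> In t' R -> ei_cong beta t t' -> t = t').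
Proof.
  intros Hbeta.
  pose proof (ei_least_int_gt0 _ Hbeta) as Hn; pose proof (ei_gcd_gt0 _ Hbeta) as Hg.
  destruct (ei_dvd_gcd_im beta) as [e He].
  exists (ei_box (ei_least_int beta) (ei_gcd beta)); split; [|split; [|split]].
  - now apply ei_box_NoDup.
  - now rewrite length_ei_box, <- ei_norm_least_int.
  - apply (ei_box_complete beta _ _ e); auto using ei_dvd_least_int, ei_gcd_dvd_im, ei_least_int_dvd.
  - apply (ei_box_distinct beta); auto using ei_gcd_dvd_im, ei_least_int_dvd.
Qed.

Lemma EJV_ext g (u v : EJV g) : (forall y, cls u y <-> cls v y) -> u = v.
Proof.
  destruct u as [cu pu], v as [cv pv]; cbn; intros H.
  assert (cu = cv) as <-.
  { apply functional_extensionality; intro; apply propositional_extensionality; auto. }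
  f_equal; apply proof_irrelevance.
Qed.

Definition EJV_of g (x : EI) : EJV g :=
  mkEJV g (fun y => ei_cong g y x) (ex_intro _ x (fun y => iff_refl _)).

Lemma EJV_of_surj g (u : EJV g) : exists x, u = EJV_of g x.
Proof. destruct (cls_ok g u) as [x Hx]; exists x; now apply EJV_ext. Qed.

Lemma EJV_of_eq g x y : EJV_of g x = EJV_of g y <-> ei_cong g x y.
Proof.
  split.
  - intros E; change (cls (EJV_of g y) x); rewrite <- E; apply ei_cong_refl.
  - intros H; apply EJV_ext; cbn; split; intros.
    + eapply ei_cong_trans; eauto.
    + eapply ei_cong_trans; eauto using ei_cong_sym.
Qed.

Lemma EJ_adj_of g x y :
  EJ_adj g (EJV_of g x) (EJV_of g y) <-> exists c, ei_conn c /\ ei_cong g y (ei_add x c).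
Proof.
  split.
  - intros (x' & y' & c & Hx & Hy & Hc & H); exists c; split; [assumption|].
    cbn in Hx, Hy; apply ei_cong_subl in H.
    apply (ei_cong_trans _ _ y'); [now apply ei_cong_sym|].
    apply (ei_cong_trans _ _ (ei_add x' c)); [assumption|].
    now apply ei_cong_add2r.
  - intros (c & Hc & H); exists x, y, c; cbn.
    repeat split; [apply ei_cong_refl | apply ei_cong_refl | assumption | now apply ei_cong_subl].
Qed.

Lemma EJV_proj_ok a b (u : EJV (ei_mul a b)) :
  exists x0, forall y, (exists x, cls u x /\ ei_cong a y x) <-> ei_cong a y x0.
Proof.
  destruct (cls_ok _ u) as [x0 Hx0]; exists x0; intro y; split.
  - intros [x [Hx Hy]]; apply Hx0, ei_cong_mulr in Hx; eapply ei_cong_trans; eauto.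
  - intros H; exists x0; split; [apply Hx0, ei_cong_refl | exact H].
Qed.

Definition EJV_proj a b (u : EJV (ei_mul a b)) : EJV a :=
  mkEJV a (fun y => exists x, cls u x /\ ei_cong a y x) (EJV_proj_ok a b u).

Lemma EJV_proj_of a b x : EJV_proj a b (EJV_of (ei_mul a b) x) = EJV_of a x.
Proof.
  apply EJV_ext; intro y; cbn; split.
  - intros [x' [H1 H2]]; eapply ei_cong_trans; eauto using ei_cong_mulr.
  - intros H; exists x; split; [apply ei_cong_refl | exact H].
Qed.

Lemma EJV_proj_lift a b x y :
  7 <= ei_norm a -> EJ_adj a (EJV_of a x) (EJV_of a y) ->
  exists! w, EJ_adj (ei_mul a b) (EJV_of _ x) w /\ EJV_proj a b w = EJV_of a y.
Proof.
  intros Ha Hadj; apply EJ_adj_of in Hadj as (c & Hc & Hy).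
  exists (EJV_of _ (ei_add x c)); split; [split|].
  - apply EJ_adj_of; exists c; split; [exact Hc | apply ei_cong_refl].
  - rewrite EJV_proj_of; apply EJV_of_eq, ei_cong_sym, Hy.
  - intros w [Hw Hpw]; destruct (EJV_of_surj _ w) as [y' ->].
    rewrite EJV_proj_of, EJV_of_eq in Hpw.
    apply EJ_adj_of in Hw as (c' & Hc' & Hy').
    assert (c' = c) as ->.
    { apply (ei_conn_cong_eq a); [assumption.. |].
      apply (ei_cong_add2l _ x), (ei_cong_trans _ _ y'); [apply ei_cong_sym, (ei_cong_mulr _ b), Hy'|].
      now apply (ei_cong_trans _ _ y). }
    now symmetry; apply EJV_of_eq.
Qed.

Lemma EJV_proj_cover a b :
  7 <= ei_norm a -> is_cover (EJ_adj (ei_mul a b)) (EJ_adj a) (EJV_proj a b).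
Proof.
  intros Ha; split.
  - intros v; destruct (EJV_of_surj _ v) as [z ->]; exists (EJV_of _ z); apply EJV_proj_of.
  - intros u; destruct (EJV_of_surj _ u) as [x ->]; split.
    + intros w; destruct (EJV_of_surj _ w) as [y ->]; rewrite !EJV_proj_of, !EJ_adj_of.
      intros (c & Hc & H); exists c; split; [exact Hc | exact (ei_cong_mulr _ _ _ _ H)].
    + intros v; destruct (EJV_of_surj _ v) as [y ->]; rewrite EJV_proj_of.
      now apply EJV_proj_lift.
Qed.

Lemma EJV_proj_fibre a b :
  a <> ei_zero -> b <> ei_zero ->
  forall v, exists l : list (EJV (ei_mul a b)),
    NoDup l /\ length l = Z.to_nat (ei_norm b) /\ (forall u, In u l <-> EJV_proj a b u = v).
Proof.
  intros Ha Hb v; destruct (EJV_of_surj _ v) as [z ->].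
  destruct (ei_residue_system b Hb) as (R & HRnd & HRlen & HRcomplete & HRdistinct).
  set (lift t := EJV_of (ei_mul a b) (ei_add z (ei_mul a t))).
  assert (Hlift : forall t t', lift t = lift t' <-> ei_cong b t t').
  { intros t t'; unfold lift; rewrite EJV_of_eq, ei_cong_add2l; now apply ei_cong_mul2l. }
  exists (map lift R); split; [|split].
  - apply NoDup_map_NoDup_ForallPairs; [|exact HRnd].
    intros t t' Ht Ht' E; apply Hlift in E; auto.
  - now rewrite length_map.
  - intros u; rewrite in_map_iff; split.
    + intros [t [<- _]]; unfold lift; rewrite EJV_proj_of; apply EJV_of_eq, ei_cong_add_mul.
    + destruct (EJV_of_surj _ u) as [y ->]; rewrite EJV_proj_of, EJV_of_eq; intros Hy.
      destruct (ei_cong_add_mul_inv _ _ _ Hy) as [s ->].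
      destruct (HRcomplete s) as [t [Ht Hst]].
      exists t; split; [|exact Ht].
      symmetry; now apply (Hlift s t).
Qed.

Theorem theorem4p1 (alpha beta : EI) :
  alpha <> ei_zero -> beta <> ei_zero -> 7 <= ei_norm alpha ->
  exists phi : EJV (ei_mul alpha beta) -> EJV alpha,
    is_kfold_cover (EJ_adj (ei_mul alpha beta)) (EJ_adj alpha) phi
      (Z.to_nat (ei_norm beta)).
Proof.
  intros Ha Hb Hn; exists (EJV_proj alpha beta); split.
  - now apply EJV_proj_cover.
  - now apply EJV_proj_fibre.
Qed.
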